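(* Let $I^h\subset\mathbb{K}[S_M^h]$ be a homogeneous ideal and let $J^h\subset\mathbb{K}[\mathbf{y}]$ be the ideal generated by $\varphi(I^h)\cup T$. If $G$ is a Gröbner basis of $J^h$ with respect to the monomial order $<_y$, then $\psi(G)$ is a sparse Gröbner basis of $I^h$ with respect to the graded sparse order $\prec_h$.
   Context: Let $\mathbb{K}$ be a field of characteristic $0$, $M\subset\mathbb{R}^n$ a polytope with $0\in M$, $S_M\subset\mathbb{Z}^n$ the affine semigroup generated by $M\cap\mathbb{Z}^n$ and $S_M^h\subset\mathbb{Z}^{n+1}$ the one generated by $\{(s,1):s\in M\cap\mathbb{Z}^n\}$, both assumed pointed. $\mathbb{K}[S]$ is the semigroup algebra with monomials $X^s$, $X^sX^t=X^{s+t}$; $\mathbb{K}[S_M^h]$ is graded by $\deg X^{(s,d)}=d$, and ''homogeneous'' refers to this grading. $\chi:\mathbb{K}[S_M^h]\to\mathbb{K}[S_M]$, $X^{(s,d)}\mapsto X^s$. The affine degree $\delta^A(X^s)$ is the least $d$ with $(s,d)\in S_M^h$, extended to polynomials by taking the maximum over the support; the sparse degree of $f\in\mathbb{K}[S_M^h]$ is $\delta(f)=\delta^A(\chi(f))$. Fix a monomial order $<_M$ on $\mathbb{K}[S_M]$; the sparse order: $X^s\prec X^r$ iff $\delta^A(X^s)<\delta^A(X^r)$, or equality and $X^s<_MX^r$; the graded sparse order on monomials of $\mathbb{K}[S_M^h]$: $X^{(s,d)}\prec_hX^{(r,d')}$ iff $d<d'$, or $d=d'$ and $X^s\prec X^r$.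 Divisibility: $X^{(s,d_s)}\mid_\delta X^{(r,d_r)}$ if some monomial $X^{(t,d_t)}$ satisfies $X^{(s,d_s)}X^{(t,d_t)}=X^{(r,d_r)}$ and $\delta(X^{(s,d_s)})+\delta(X^{(t,d_t)})=\delta(X^{(r,d_r)})$. A sparse Gröbner basis of an ideal $I^h\subset\mathbb{K}[S_M^h]$ w.r.t. $\prec_h$ is a subset of $I^h$ generating $I^h$ such that for every nonzero $f\in I^h$ some element $g$ of it satisfies $\mathrm{LM}_{\prec_h}(g)\mid_\delta\mathrm{LM}_{\prec_h}(f)$. Let $a_0,\dots,a_m$ be the elements of $\{(s,1):s\in M\cap\mathbb{Z}^n\}$ with $a_0=(0,1)$. Let $\mathbb{K}[\mathbf{y}]=\mathbb{K}[y_0,\dots,y_m]$ with standard grading and $\psi:\mathbb{K}[\mathbf{y}]\to\mathbb{K}[S_M^h]$ the degree-preserving $\mathbb{K}$-algebra epimorphism $y_i\mapsto X^{a_i}$; its kernel $T$ is the (homogeneous, prime) lattice ideal $\langle\mathbf{y}^u-\mathbf{y}^v:\psi(\mathbf{y}^u)=\psi(\mathbf{y}^v)\rangle$. Fix any monomial order $\tilde<$ on $\mathbb{K}[\mathbf{y}]$ and define the monomial order $<_y$: $\mathbf{y}^a<_y\mathbf{y}^b$ iff $\deg\mathbf{y}^a<\deg\mathbf{y}^b$; or the total degrees are equal and $\deg_{y_0}\mathbf{y}^a>\deg_{y_0}\mathbf{y}^b$; or both are equal and $\chi(\psi(\mathbf{y}^a))<_M\chi(\psi(\mathbf{y}^b))$;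 or all these are equal and $\mathbf{y}^a\,\tilde<\,\mathbf{y}^b$. For $g\in\mathbb{K}[\mathbf{y}]$, $\eta(g)$ is the normal form (remainder of division by a Gröbner basis) of $g$ with respect to $T$ and $<_y$. Define $\varphi:\mathbb{K}[S_M^h]\to\mathbb{K}[\mathbf{y}]$ by $\varphi(f)=\eta(g)$ for any $g$ with $\psi(g)=f$ (well defined). *)

From HB Require Import structures.
From mathcomp Require Import all_boot all_order all_algebra.
From mathcomp Require Import finmap.
From mathcomp.multinomials Require Export monalg.
From Stdlib Require Import ClassicalEpsilon.

Set Implicit Arguments.
Unset Strict Implicit.
Unset Printing Implicit Defensive.

Import Order.TTheory GRing.Theory Num.Theory.
Local Open Scope ring_scope.

Definition in_conv (R : realFieldType) (n : nat) (V : seq 'rV[R]_n)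
    (x : 'rV[R]_n) : Prop :=
  exists l : 'I_(size V) -> R,
    [/\ forall i, 0 <= l i, \sum_i l i = 1 & \sum_i l i *: V`_i = x].

Definition lattice_pt (R : realFieldType) (n : nat) (z : 'rV[int]_n) : 'rV[R]_n :=
  map_mx (fun c : int => c%:~R) z.

Definition is_ideal (A : comRingType) (I : A -> Prop) : Prop :=
  [/\ I 0, (forall f g, I f -> I g -> I (f + g)) &
      (forall h f, I f -> I (h * f))].

Definition ideal_gen (A : comRingType) (S : A -> Prop) (f : A) : Prop :=
  exists l : seq (A * A),
    (forall p, p \in l -> S p.2) /\ f = \sum_(p <- l) p.1 * p.2.

Definition monomial_order (T : Type) (S : T -> Prop) (add : T -> T -> T)
    (lt : T -> T -> bool) : Prop :=
  [/\ (forall s, S s -> ~~ lt s s),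
      (forall s r t, S s -> S r -> S t -> lt s r -> lt r t -> lt s t),
      (forall s r, S s -> S r -> s <> r -> lt s r \/ lt r s),
      (forall s r u, S s -> S r -> S u -> lt s r -> lt (add s u) (add r u)) &
      (forall P : T -> Prop, (exists s, S s /\ P s) ->
         exists s, [/\ S s, P s & forall r, S r -> P r -> ~~ lt r s])].

Definition is_LM (K : choiceType) (G : zmodType) (lt : K -> K -> bool)
    (f : {malg G[K]}) (u : K) : Prop :=
  u \in msupp f /\ (forall v, v \in msupp f -> v != u -> lt v u).

Section Semigroup.
Variables (n m : nat) (a : 'I_m.+1 -> 'rV[int]_n).

(* (s,d) in S_M^h  iff  s is a sum of d lattice points a_i           *)
(* (with repetitions), i.e. (s,d) = sum_i t_i (a_i,1) with t_i >= 0  *)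
Definition memSh (p : 'rV[int]_n * nat) : bool :=
  [exists t : {ffun 'I_m.+1 -> 'I_(p.2.+1)},
     ((\sum_i (t i : nat))%N == p.2) && (\sum_i a i *+ t i == p.1)].

Definition Sh := {p : 'rV[int]_n * nat | memSh p}.
HB.instance Definition _ := [Choice of Sh by <:].

Lemma memSh0 : memSh (0, 0%N).
Proof.
apply/existsP; exists [ffun=> ord0]; apply/andP; split.
  by rewrite big1 // => i _; rewrite ffunE.
by apply/eqP; rewrite big1 // => i _; rewrite ffunE mulr0n.
Qed.

Lemma memShD p q : memSh p -> memSh q -> memSh (p.1 + q.1, (p.2 + q.2)%N).
Proof.
case/existsP=> t /andP[/eqP Ht /eqP Hs]; case/existsP=> u /andP[/eqP Hu /eqP Hr].
have bnd i : (t i + u i < (p.2 + q.2).+1)%N.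
  by rewrite ltnS leq_add // -ltnS.
apply/existsP; exists [ffun i => inord (t i + u i)]; apply/andP; split => /=.
  apply/eqP; transitivity (\sum_i (t i + u i))%N; last by rewrite big_split /= Ht Hu.
  by apply: eq_bigr => i _; rewrite ffunE inordK.
apply/eqP; transitivity (\sum_i (a i *+ t i + a i *+ u i)); last by rewrite big_split /= Hs Hr.
by apply: eq_bigr => i _; rewrite ffunE inordK // mulrnDr.
Qed.

Definition Sh0 : Sh := exist _ (0, 0%N) memSh0.
Definition ShD (p q : Sh) : Sh :=
  exist _ ((val p).1 + (val q).1, ((val p).2 + (val q).2)%N)
    (memShD (valP p) (valP q)).

Lemma ShDA : associative ShD.
Proof. by move=> p q r; apply: val_inj => /=; rewrite addrA addnA. Qed.
Lemma ShDC : commutative ShD.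
Proof. by move=> p q; apply: val_inj => /=; rewrite addrC addnC. Qed.
Lemma Sh0D : left_id Sh0 ShD.
Proof. by case=> [[s d] h]; apply: val_inj => /=; rewrite add0r add0n. Qed.
Lemma ShD0 : right_id Sh0 ShD.
Proof. by move=> p; rewrite ShDC Sh0D. Qed.

Lemma memSh_deg0 s : memSh (s, 0%N) -> s = 0.
Proof.
case/existsP=> t /andP[_ /eqP /= <-]; rewrite big1 // => i _.
by case: (t i) => -[|k] //= _; rewrite mulr0n.
Qed.

Lemma ShD_eq0 p q : ShD p q = Sh0 -> p = Sh0 /\ q = Sh0.
Proof.
case: p q => [[s d] hp] [[r e] hq] /(congr1 val) /= [_ /eqP].
rewrite addn_eq0 => /andP[/eqP Hd /eqP He]; subst d e.
by split; apply: val_inj => /=; congr (_, _); apply: memSh_deg0.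
Qed.

HB.instance Definition _ := Choice_isMonomialDef.Build Sh ShDA Sh0D ShD0 ShD_eq0.
HB.instance Definition _ := MonomialDef_isConomialDef.Build Sh ShDC.

(* s in S_M (the semigroup generated by M cap Z^n, 0 in M)             *)
Definition inSM (s : 'rV[int]_n) : Prop := exists d, memSh (s, d).

Definition deltaA (s : 'rV[int]_n) : nat :=
  match excluded_middle_informative (exists d, memSh (s, d)) with
  | left H => ex_minn H
  | right _ => 0%N
  end.

Definition sdeg (p : Sh) : nat := deltaA (val p).1.

Definition sparse_lt (ltM : rel 'rV[int]_n) (s r : 'rV[int]_n) : bool :=
  (deltaA s < deltaA r)%N || ((deltaA s == deltaA r) && ltM s r).

Definition gsparse_lt (ltM : rel 'rV[int]_n) (p q : Sh) : bool :=
  ((val p).2 < (val q).2)%N ||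
  (((val p).2 == (val q).2) && sparse_lt ltM (val p).1 (val q).1).

Definition ddivides (p q : Sh) : Prop :=
  exists t : Sh, ShD p t = q /\ (sdeg p + sdeg t)%N = sdeg q.

Definition hcomp (K : ringType) (e : nat) (f : {malg K[Sh]}) : {malg K[Sh]} :=
  \sum_(p <- msupp f | (val p).2 == e) << f@_p *g p >>.

Definition homogeneous_ideal (K : comRingType) (I : {malg K[Sh]} -> Prop) :=
  is_ideal I /\ (forall f e, I f -> I (hcomp e f)).

(* The polynomial ring K[y_0..y_m] (monomials 'X_{1..m.+1}) and psi   *)
Definition tdeg (u : 'X_{1..m.+1}) : nat := (\sum_i u i)%N.

(* chi(psi(y^u)) = X^(sum_i u_i a_i) *)
Definition chipsi (u : 'X_{1..m.+1}) : 'rV[int]_n := \sum_i a i *+ u i.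

Lemma memSh_psi (u : 'X_{1..m.+1}) : memSh (chipsi u, tdeg u).
Proof.
have bnd i : (u i < (tdeg u).+1)%N.
  by rewrite ltnS /tdeg (bigD1 i) //= leq_addr.
apply/existsP; exists [ffun i => inord (u i)]; apply/andP; split => /=.
  by apply/eqP/eq_bigr => i _; rewrite ffunE inordK.
by apply/eqP/eq_bigr => i _; rewrite ffunE inordK.
Qed.

Definition psimon (u : 'X_{1..m.+1}) : Sh := exist _ (chipsi u, tdeg u) (memSh_psi u).

Definition psi (K : ringType) (g : {malg K['X_{1..m.+1}]}) : {malg K[Sh]} :=
  \sum_(u <- msupp g) << g@_u *g psimon u >>.

Definition lt_y (ltM : rel 'rV[int]_n) (ltT : rel 'X_{1..m.+1})
    (u v : 'X_{1..m.+1}) : bool :=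
  (tdeg u < tdeg v)%N ||
  ((tdeg u == tdeg v) &&
   ((v ord0 < u ord0)%N ||
    ((u ord0 == v ord0) &&
     (ltM (chipsi u) (chipsi v) ||
      ((chipsi u == chipsi v) && ltT u v))))).

Definition Tker (K : ringType) (g : {malg K['X_{1..m.+1}]}) : Prop :=
  psi g = 0.

(* r is the normal form eta(g) of g w.r.t. T and <_y: g - r in T and  *)
(* no monomial of r is the leading monomial of a nonzero element of T *)
Definition is_NF (K : ringType) (ltM : rel 'rV[int]_n) (ltT : rel 'X_{1..m.+1})
    (r g : {malg K['X_{1..m.+1}]}) : Prop :=
  Tker (g - r) /\
  (forall u, u \in msupp r ->
     ~ exists h : {malg K['X_{1..m.+1}]}, [/\ Tker h, h != 0 & is_LM (lt_y ltM ltT) h u]).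

(* phi(I^h) = { eta(g) | psi(g) in I^h } *)
Definition phi_img (K : ringType) (ltM : rel 'rV[int]_n) (ltT : rel 'X_{1..m.+1})
    (I : {malg K[Sh]} -> Prop) (r : {malg K['X_{1..m.+1}]}) : Prop :=
  exists f, I f /\ exists g, psi g = f /\ is_NF ltM ltT r g.

End Semigroup.

Definition is_groebner (K : comRingType) (k : nat) (lt : rel 'X_{1..k})
    (J : {malg K['X_{1..k}]} -> Prop) (G : seq {malg K['X_{1..k}]}) : Prop :=
  (forall g, g \in G -> J g) /\
  (forall f, J f -> f != 0 ->
     exists2 g, g \in G &
       g != 0 /\ exists ug uf,
         [/\ is_LM lt g ug, is_LM lt f uf & exists w, mulcm ug w = uf]).

Definition is_sparse_groebner (K : comRingType) (n m : nat) (a : 'I_m.+1 -> 'rV[int]_n)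
    (ltM : rel 'rV[int]_n) (I : {malg K[Sh a]} -> Prop)
    (G : seq {malg K[Sh a]}) : Prop :=
  [/\ (forall g, g \in G -> I g),
      (forall f, I f -> ideal_gen (fun g => g \in G) f) &
      (forall f, I f -> f != 0 ->
         exists2 g, g \in G &
           g != 0 /\ exists pg pf,
             [/\ is_LM (gsparse_lt ltM) g pg, is_LM (gsparse_lt ltM) f pf
               & ddivides pg pf])].

(* Write psi(y^u) = X^(chi u, deg u).  Within a fiber of psi the order <_y prefers
   monomials with a larger power of y_0, and y_0 maps to X^(0,1) because a_0 = 0; so the
   <_y-least monomial u of its fiber has deg u - u_0 = delta^A(chi u), the sparse degree of
   psi(y^u).  On such fiber-minimal monomials psi turns <_y into the graded sparse order
   and a divisibility u * w into delta-divisibility, hence maps the <_y-leading monomial of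
   g to the leading monomial of psi(g).  Lifting f in I^h coefficientwise to fiber-minimal
   monomials gives phi(f), an element of J^h with psi(phi f) = f and the same leading
   monomial; a Groebner basis element whose leading monomial divides that of phi(f) gives
   the sparse divisor.  Finally G generates J^h and psi maps J^h into I^h, so psi(G)
   generates I^h. *)

From Pilot Require Import Defs.
From HB Require Import structures.
From mathcomp Require Import all_boot all_order all_algebra.
From mathcomp Require Import finmap.
From mathcomp.multinomials Require Import monalg.
From mathcomp Require Import zify.
From Stdlib Require Import Classical ClassicalEpsilon.

Set Implicit Arguments.
Unset Strict Implicit.
Unset Printing Implicit Defensive.

Import Order.TTheory GRing.Theory Num.Theory.
Local Open Scope ring_scope.

Definition has_minimal (X : Type) (D : X -> Prop) (lt : rel X) : Prop :=
  forall P : X -> Prop, (exists x, D x /\ P x) ->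
    exists x, [/\ D x, P x & forall y, D y -> P y -> ~~ lt y x].

Lemma has_minimalS (X : Type) (D D' : X -> Prop) (lt : rel X) :
  (forall x, D' x -> D x) -> has_minimal D lt -> has_minimal D' lt.
Proof.
move=> sDD' minD P [x [D'x Px]].
have [y [_ [D'y Py] miny]] := minD (fun y => D' y /\ P y)
  (ex_intro _ x (conj (sDD' x D'x) (conj D'x Px))).
by exists y; split=> // z D'z Pz; apply: miny; [apply: sDD'|].
Qed.

Lemma ltn_has_minimal (D : nat -> Prop) : has_minimal D ltn.
Proof.
move=> P [x [Dx Px]]; apply: NNPP => nomin.
elim/ltn_ind: x Dx Px => x IH Dx Px; apply: nomin; exists x; split=> // y Dy Py.
by apply/negP => ltyx; apply: IH ltyx Dy Py.
Qed.

Lemma bounded_gtn_has_minimal (B : nat) :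
  has_minimal (fun e => e <= B)%N (fun x y => y < x)%N.
Proof.
move=> P [x [xB Px]].
have [_ [_ [y [yB Py <-]] miny]] := @ltn_has_minimal (fun _ => True)
  (fun d => exists y, [/\ y <= B, P y & B - y = d]%N)
  (ex_intro _ _ (conj I (ex_intro _ x (And3 xB Px erefl)))).
exists y; split=> // z zB Pz.
by apply: contraNN (miny _ I (ex_intro _ z (And3 zB Pz erefl))); lia.
Qed.

Section Lexicographic.
Variables (X : Type) (A : eqType) (k : X -> A) (r : rel A) (r2 : rel X).

Definition lex (u v : X) : bool := r (k u) (k v) || (k u == k v) && r2 u v.

Lemma lex_trans :
  (forall u v w, r (k u) (k v) -> r (k v) (k w) -> r (k u) (k w)) ->
  (forall u v w, r2 u v -> r2 v w -> r2 u w) ->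
  forall u v w, lex u v -> lex v w -> lex u w.
Proof.
move=> trr trr2 u v w; rewrite /lex.
case/orP=> [ruv|/andP[/eqP-> r2uv]]; case/orP=> [rvw|/andP[/eqP<- r2vw]].
- by rewrite (trr _ _ _ ruv rvw).
- by rewrite ruv.
- by rewrite rvw.
- by rewrite eqxx (trr2 _ _ _ r2uv r2vw) orbT.
Qed.

Lemma lex_irr : (forall u, ~~ r (k u) (k u)) -> (forall u, ~~ r2 u u) -> forall u, ~~ lex u u.
Proof. by move=> irr irr2 u; rewrite /lex negb_or irr negb_and irr2 orbT. Qed.

Lemma lex_total :
  (forall u v, k u != k v -> r (k u) (k v) \/ r (k v) (k u)) ->
  (forall u v, k u = k v -> u <> v -> r2 u v \/ r2 v u) ->
  forall u v, u <> v -> lex u v \/ lex v u.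
Proof.
move=> tot tot2 u v neq_uv; rewrite /lex; have [kuv|nkuv] := eqVneq (k u) (k v).
  by rewrite kuv; case: (tot2 _ _ kuv neq_uv) => ->; [left|right]; rewrite orbT.
by case: (tot _ _ nkuv) => ->; [left|right].
Qed.

Lemma lex_mono (f : X -> X) :
  (forall u v, r (k u) (k v) -> r (k (f u)) (k (f v))) ->
  (forall u v, k u = k v -> k (f u) = k (f v)) ->
  (forall u v, r2 u v -> r2 (f u) (f v)) ->
  forall u v, lex u v -> lex (f u) (f v).
Proof.
move=> fr fk fr2 u v; rewrite /lex.
by case/orP=> [/fr->//|/andP[/eqP/fk-> /fr2->]]; rewrite eqxx orbT.
Qed.

Lemma lex_has_minimal (D : X -> Prop) :
  has_minimal (fun b => exists2 x, D x & k x = b) r ->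
  (forall b, has_minimal (fun x => D x /\ k x = b) r2) ->
  has_minimal D lex.
Proof.
move=> minr minr2 P [x [Dx Px]].
have [b [_ [y [Dy Py kyb]] minb]] := minr (fun b => exists x, [/\ D x, P x & k x = b])
  (ex_intro _ (k x) (conj (ex_intro2 _ _ x Dx erefl) (ex_intro _ x (And3 Dx Px erefl)))).
have [z [[Dz kzb] Pz minz]] := minr2 b P (ex_intro _ y (conj (conj Dy kyb) Py)).
exists z; split=> // t Dt Pt.
have nrtb : ~~ r (k t) b by apply: minb; exists t.
by rewrite /lex negb_or kzb nrtb negb_and; case: eqP => //= ktb; apply: minz.
Qed.

End Lexicographic.

Section IdealGen.
Variables (A : comNzRingType) (S : A -> Prop).

Lemma ideal_gen_ideal : is_ideal (ideal_gen S).
Proof.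
split; first by exists [::]; rewrite big_nil.
  move=> _ _ [l1 [Sl1 ->]] [l2 [Sl2 ->]]; exists (l1 ++ l2); rewrite big_cat.
  by split=> // p; rewrite mem_cat => /orP[/Sl1|/Sl2].
move=> h _ [l [Sl ->]]; exists [seq (h * p.1, p.2) | p <- l]; split.
  by move=> _ /mapP[p pl ->]; apply: Sl pl.
by rewrite big_map mulr_sumr; apply: eq_bigr => p _; rewrite mulrA.
Qed.

Lemma ideal_gen_mem g : S g -> ideal_gen S g.
Proof.
move=> Sg; exists [:: (1, g)]; rewrite big_seq1 mul1r.
by split=> // p; rewrite inE => /eqP->.
Qed.

Lemma ideal_gen_min (J : A -> Prop) :
  is_ideal J -> (forall x, S x -> J x) -> forall f, ideal_gen S f -> J f.
Proof.
case=> J0 JD JM SJ _ [l [Sl ->]]; elim: l Sl => [|p l IH] Sl; first by rewrite big_nil.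
rewrite big_cons; apply: JD; first by apply/JM/SJ/Sl; rewrite inE eqxx.
by apply: IH => q ql; apply: Sl; rewrite inE ql orbT.
Qed.

End IdealGen.

Lemma is_idealB (A : comNzRingType) (J : A -> Prop) f g :
  is_ideal J -> J f -> J g -> J (f - g).
Proof. by case=> _ JD JM Jf Jg; rewrite -mulN1r; apply/JD/JM. Qed.

Lemma ideal_gen_rmorph (A B : comNzRingType) (f : {rmorphism A -> B})
    (S : A -> Prop) (T : B -> Prop) :
  (forall x, S x -> T (f x)) -> forall x, ideal_gen S x -> ideal_gen T (f x).
Proof.
move=> ST _ [l [Sl ->]]; exists [seq (f p.1, f p.2) | p <- l]; split.
  by move=> _ /mapP[p pl ->]; apply/ST/(Sl _ pl).
by rewrite rmorph_sum big_map; apply: eq_bigr => p _; rewrite rmorphM.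
Qed.

Section LeadingMonomial.
Variables (X : choiceType) (V : zmodType) (lt : rel X).
Hypotheses (lt_irr : forall x, ~~ lt x x)
  (lt_trans : forall x y z, lt x y -> lt y z -> lt x z)
  (lt_total : forall x y, x <> y -> lt x y \/ lt y x).

Lemma exists_greatest (s : seq X) :
  s != [::] -> exists2 x, x \in s & forall y, y \in s -> y != x -> lt y x.
Proof.
elim: s => [//|x [|y s] IH] _.
  by exists x => [|z]; rewrite ?mem_seq1 // => ->.
have [z zs maxz] := IH isT.
have [->|neq_xz] := eqVneq x z.
  by exists z => [|t]; rewrite inE ?zs ?orbT // => /orP[/eqP->|/maxz]; rewrite ?eqxx.
case: (lt_total (elimN eqP neq_xz)) => [ltxz|ltzx].
  by exists z => [|t]; rewrite inE ?zs ?orbT // => /orP[/eqP->|/maxz].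
exists x => [|t]; first by rewrite inE eqxx.
rewrite inE => /orP[/eqP->|ts ntx]; first by rewrite eqxx.
have [->//|ntz] := eqVneq t z.
exact: lt_trans (maxz t ts ntz) ltzx.
Qed.

Lemma is_LM_exists (h : {malg V[X]}) : h != 0 -> exists u, is_LM lt h u.
Proof.
move=> nz_h; have [|u uh maxu] := @exists_greatest (msupp h).
  apply: contraNneq nz_h => supp_nil; apply/eqP/malgP => x.
  by rewrite mcoeff0 mcoeff_outdom // -[x \in _]/(x \in (msupp h : seq X)) supp_nil.
by exists u.
Qed.

Lemma is_LM_uniq (h : {malg V[X]}) u u' : is_LM lt h u -> is_LM lt h u' -> u = u'.
Proof.
move=> [uh maxu] [u'h maxu']; apply: contra_eq (lt_irr u) => neq_uu'.
by rewrite (lt_trans (maxu' _ uh neq_uu') (maxu _ u'h _)) // eq_sym.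
Qed.

End LeadingMonomial.

Section GroebnerBasis.
Variables (K : fieldType) (k : nat) (lt : rel 'X_{1..k}).
Hypothesis lt_order : monomial_order (fun _ => True) (@mulcm _) lt.

Let lt_irr u : ~~ lt u u.
Proof. by case: lt_order => irr _ _ _ _; apply: irr. Qed.

Let lt_trans u v w : lt u v -> lt v w -> lt u w.
Proof. by case: lt_order => _ tr _ _ _; apply: tr. Qed.

Let lt_total u v : u <> v -> lt u v \/ lt v u.
Proof. by case: lt_order => _ _ tot _ _; apply: tot. Qed.

Let ltMr u v w : lt u v -> lt (mulcm u w) (mulcm v w).
Proof. by case: lt_order => _ _ _ mul _; apply: mul. Qed.

Let lt_minimal : has_minimal (fun _ => True) lt.
Proof. by case: lt_order. Qed.

Lemma is_LM_reduce (h g : {mpoly K[k]}) u ug w :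
  is_LM lt h u -> is_LM lt g ug -> mulcm ug w = u ->
  forall v, v \in msupp (h - << h@_u / g@_ug *g w >> * g) -> lt v u.
Proof.
move=> [uh maxh] [ugg maxg] ugw v.
have wM t : mmul w t = mulcm t w by rewrite /= mulcmC.
have ltwM t : t \in msupp g -> t != ug -> lt (mmul w t) u.
  by move=> tg ntug; rewrite wM -ugw; apply: ltMr; apply: maxg.
have coef_u : (<< h@_u / g@_ug *g w >> * g)@_u = h@_u.
  rewrite malgM_def fgmulUg raddf_sum (big_fsetD1 ug) //= big_seq big1.
    by rewrite addr0 mcoeffU wM ugw eqxx mulr1n divfK // mcoeff_neq0.
  move=> t /[!in_fsetD1] /andP[ntug tg]; rewrite mcoeffU.
  by case: eqP (ltwM t tg ntug) => // ->; rewrite (negbTE (lt_irr u)).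
move=> vh'; have nvu : v != u.
  by apply: contraTneq vh' => ->; rewrite -mcoeff_eq0 mcoeffB coef_u subrr.
have /fsubsetP/(_ v vh') := msuppB_le h (<< h@_u / g@_ug *g w >> * g).
rewrite inE => /orP[/maxh|/msuppM_le[t1 [t2 [t1w t2g vE]]]]; first exact.
have := fsubsetP msuppU_le _ t1w; rewrite inE => /eqP t1E.
rewrite vE t1E; apply: ltwM t2g _; apply: contra_neq nvu => t2ug.
by rewrite vE t1E t2ug wM ugw.
Qed.

Lemma groebner_ideal_gen (S : {mpoly K[k]} -> Prop) (G : seq {mpoly K[k]}) :
  is_groebner lt (ideal_gen S) G ->
  forall h, ideal_gen S h -> ideal_gen (fun g => g \in G) h.
Proof.
move=> [GS GB] h Sh; apply: NNPP => notGh.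
have nz_of_notG f : ~ ideal_gen (fun g => g \in G) f -> f != 0.
  move=> notGf; apply/eqP => f0; apply: notGf; rewrite f0.
  by case: (ideal_gen_ideal (fun g => g \in G)).
have [u0 LMh] := is_LM_exists lt_trans lt_total (nz_of_notG h notGh).
have [u [_ [hu [Shu notGhu LMhu]] minu]] := @lt_minimal
  (fun u => exists h, [/\ ideal_gen S h, ~ ideal_gen (fun g => g \in G) h & is_LM lt h u])
  (ex_intro _ u0 (conj I (ex_intro _ h (And3 Sh notGh LMh)))).
have [g gG [_ [ug [uf [LMg LMuf [w ugw]]]]]] := GB hu Shu (nz_of_notG _ notGhu).
rewrite (is_LM_uniq lt_irr lt_trans LMuf LMhu) in ugw.
set r := << hu@_u / g@_ug *g w >> * g.
have Sr : ideal_gen S (hu - r).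
  apply: is_idealB (ideal_gen_ideal S) Shu _.
  by case: (ideal_gen_ideal S) => _ _ JM; apply/JM/GS.
have notGr : ~ ideal_gen (fun g => g \in G) (hu - r).
  move=> Gr; apply: notGhu; rewrite -(subrK r hu).
  case: (ideal_gen_ideal (fun g => g \in G)) => _ JD JM.
  by apply/JD/JM/ideal_gen_mem.
have [v LMv] := is_LM_exists lt_trans lt_total (nz_of_notG _ notGr).
have := minu v I (ex_intro _ _ (And3 Sr notGr LMv)).
by case: LMv => vr _; rewrite (is_LM_reduce LMhu LMg ugw vr).
Qed.

End GroebnerBasis.

Definition cm_of_fun (k : nat) (f : 'I_k -> nat) : 'X_{1..k} :=
  [cmonom f i | i in [fset j | j : 'I_k]]%M.

Lemma cm_of_funE k (f : 'I_k -> nat) i : cm_of_fun f i = f i.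
Proof. by rewrite /cm_of_fun cmE /= fsfun_fun ifT // inE. Qed.

Section PolytopeSemigroup.
Variables (n m : nat) (a : 'I_m.+1 -> 'rV[int]_n).
Hypothesis a0 : a ord0 = 0.
Variables (ltM : rel 'rV[int]_n) (ltT : rel 'X_{1..m.+1}).
Hypotheses (ltM_order : monomial_order (inSM a) +%R ltM)
  (ltT_order : monomial_order (fun _ => True) (@mulcm _) ltT).

Implicit Types (u v w : 'X_{1..m.+1}).
Local Notation tdeg := (@tdeg m).
Local Notation chipsi := (chipsi a).
Local Notation psimon := (psimon a).
Local Notation lty := (lt_y a ltM ltT).

Lemma tdegM u v : tdeg (mulcm u v) = (tdeg u + tdeg v)%N.
Proof. by rewrite /Defs.tdeg -big_split; apply: eq_bigr => i _; rewrite mulcmE. Qed.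

Lemma chipsiM u v : chipsi (mulcm u v) = chipsi u + chipsi v.
Proof. by rewrite /Defs.chipsi -big_split; apply: eq_bigr => i _; rewrite mulcmE mulrnDr. Qed.

Lemma psimonM u v : psimon (mulcm u v) = ShD (psimon u) (psimon v).
Proof. by apply: val_inj; rewrite /= chipsiM tdegM. Qed.

Lemma psimon1 : psimon mone = Sh0 a.
Proof.
apply: val_inj; rewrite /= /Defs.chipsi /Defs.tdeg.
by congr (_, _); [apply: big1 => i _; rewrite cm1 | apply: big1 => i _; rewrite cm1].
Qed.

Lemma tdeg_cm_of_fun (f : 'I_m.+1 -> nat) : tdeg (cm_of_fun f) = (\sum_i f i)%N.
Proof. by apply: eq_bigr => i _; rewrite cm_of_funE. Qed.

Lemma chipsi_cm_of_fun (f : 'I_m.+1 -> nat) : chipsi (cm_of_fun f) = \sum_i a i *+ f i.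
Proof. by apply: eq_bigr => i _; rewrite cm_of_funE. Qed.

Lemma psimon_surj (p : Sh a) : exists u, psimon u = p.
Proof.
case: p => [[s d] sd]; have /existsP[t /andP[/eqP sum_t /eqP sum_at]] := sd.
exists (cm_of_fun (fun i => t i)); apply: val_inj => /=.
by rewrite chipsi_cm_of_fun tdeg_cm_of_fun sum_t sum_at.
Qed.

Lemma cm0_le_tdeg u : (u ord0 <= tdeg u)%N.
Proof. by rewrite /Defs.tdeg (bigD1 ord0) //= leq_addr. Qed.

Lemma chipsi_inSM u : inSM a (chipsi u).
Proof. by exists (tdeg u); apply: memSh_psi. Qed.

Lemma lt_y_lex : lty = lex tdeg ltn
  (lex (fun u => u ord0) (fun x y => y < x)%N (lex chipsi ltM ltT)).
Proof. by []. Qed.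

Lemma lt_y_trans u v w : lty u v -> lty v w -> lty u w.
Proof.
case: ltM_order => _ trM _ _ _; case: ltT_order => _ trT _ _ _.
rewrite lt_y_lex; apply: lex_trans => [x y z|]; first exact: ltn_trans.
apply: lex_trans => [x y z ltyx ltzy|]; first exact: ltn_trans ltzy ltyx.
apply: lex_trans => [x y z|x y z]; last exact: trT.
exact/trM/chipsi_inSM/chipsi_inSM/chipsi_inSM.
Qed.

Lemma lt_y_irr u : ~~ lty u u.
Proof.
case: ltM_order => irM _ _ _ _; case: ltT_order => irT _ _ _ _.
rewrite lt_y_lex; apply: lex_irr => [x|]; first by rewrite /ltn /= ltnn.
apply: lex_irr => [x|]; first by rewrite /ltn /= ltnn.
by apply: lex_irr => x; [apply/irM/chipsi_inSM|apply: irT].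
Qed.

Lemma lt_y_total u v : u <> v -> lty u v \/ lty v u.
Proof.
case: ltM_order => _ _ toM _ _; case: ltT_order => _ _ toT _ _.
rewrite lt_y_lex; apply: lex_total => [x y|x y _].
  by case: (ltngtP (tdeg x) (tdeg y)) => //; [left|right].
apply: lex_total => [x' y'|x' y' _].
  by case: (ltngtP (x' ord0) (y' ord0)) => //; [right|left].
apply: lex_total => [x'' y'' /eqP|x'' y'' _]; last exact: toT.
by apply: toM; apply: chipsi_inSM.
Qed.

Lemma lt_yMr u v w : lty u v -> lty (mulcm u w) (mulcm v w).
Proof.
case: ltM_order => _ _ _ mulM _; case: ltT_order => _ _ _ mulT _.
have lex_mulr (A : eqType) k r r2 := @lex_mono 'X_{1..m.+1} A k r r2 (fun x => mulcm x w).
rewrite lt_y_lex; apply: (lex_mulr) => [x y /=|x y /= xy|]; rewrite ?tdegM ?ltn_add2r ?xy //.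
apply: (lex_mulr) => [x y /=|x y /= xy|]; rewrite ?mulcmE ?ltn_add2r ?xy //.
apply: (lex_mulr) => [x y /=|x y /= xy|x y]; rewrite ?chipsiM ?xy //; last exact: mulT.
by apply: mulM; apply: chipsi_inSM.
Qed.

Lemma lt_y_has_minimal : has_minimal (fun _ => True) lty.
Proof.
case: ltM_order => _ _ _ _ minM; case: ltT_order => _ _ _ _ minT.
rewrite lt_y_lex; apply: lex_has_minimal => [|d]; first exact: ltn_has_minimal.
apply: lex_has_minimal => [|e].
  refine (has_minimalS _ (bounded_gtn_has_minimal (B := d))) => _ [u [_ <-] <-].
  exact: cm0_le_tdeg.
apply: lex_has_minimal => [|s].
  by refine (has_minimalS _ minM) => _ [u _ <-]; apply: chipsi_inSM.
exact: (has_minimalS _ minT).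
Qed.

Lemma lt_y_monomial_order : monomial_order (fun _ => True) (@mulcm _) lty.
Proof.
split=> [u _|u v w _ _ _|u v _ _|u v w _ _ _|]; last exact: lt_y_has_minimal.
- exact: lt_y_irr.
- exact: lt_y_trans.
- exact: lt_y_total.
- exact: lt_yMr.
Qed.

Section PsiMorphism.
Variable K : comNzRingType.

Definition psimonU u : {malg K[Sh a]} := << psimon u >>.

Lemma psimonU_mmorphism : mmorphism psimonU.
Proof.
split=> [u v|]; last by rewrite /psimonU psimon1.
by rewrite /psimonU (psimonM u v) malgM_def fgmulUU mulr1.
Qed.

HB.instance Definition _ :=
  isMultiplicative.Build 'X_{1..m.+1} {malg K[Sh a]} psimonU psimonU_mmorphism.

Lemma psi_mmap (g : {malg K['X_{1..m.+1}]}) : psi a g = mmap malgC psimonU g.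
Proof.
rewrite mmapE; apply: eq_bigr => u _.
by rewrite /psimonU malgM_def fgmulUU mulr1 mul1m.
Qed.

Lemma psi_is_zmod_morphism : zmod_morphism (@psi n m a K).
Proof. by move=> g h; rewrite !psi_mmap raddfB. Qed.

HB.instance Definition _ :=
  GRing.isZmodMorphism.Build {malg K['X_{1..m.+1}]} {malg K[Sh a]} (@psi n m a K)
    psi_is_zmod_morphism.

Lemma psi_is_monoid_morphism : monoid_morphism (@psi n m a K).
Proof. by split=> [|g h]; rewrite !psi_mmap (rmorph1, rmorphM). Qed.

HB.instance Definition _ :=
  GRing.isMonoidMorphism.Build {malg K['X_{1..m.+1}]} {malg K[Sh a]} (@psi n m a K)
    psi_is_monoid_morphism.

Lemma psi_coef (g : {malg K['X_{1..m.+1}]}) p :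
  (psi a g)@_p = \sum_(v <- msupp g) g@_v *+ (psimon v == p).
Proof. by rewrite /Defs.psi raddf_sum; apply: eq_bigr => v _; rewrite /= mcoeffU. Qed.

Lemma psiU (c : K) u : psi a << c *g u >> = << c *g psimon u >>.
Proof. by rewrite psi_mmap mmapU /psimonU malgM_def fgmulUU mulr1 mul1m. Qed.

End PsiMorphism.

Lemma deltaA_le s d : memSh a (s, d) -> (deltaA a s <= d)%N.
Proof.
move=> sd; rewrite /deltaA; case: excluded_middle_informative => [ex|[]]; last by exists d.
by case: ex_minnP => e _; apply.
Qed.

Lemma deltaA_memSh s : inSM a s -> memSh a (s, deltaA a s).
Proof. by rewrite /deltaA; case: excluded_middle_informative => // ex _; case: ex_minnP. Qed.

(* Since a_0 = 0, deleting the y_0-part of u does not change chi u. *)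
Lemma deltaA_chipsi_le u : (deltaA a (chipsi u) <= tdeg u - u ord0)%N.
Proof.
pose u' := cm_of_fun (fun i => if i == ord0 then 0%N else u i).
have chipsi_u' : chipsi u' = chipsi u.
  rewrite chipsi_cm_of_fun /Defs.chipsi (bigD1 ord0) //= [in RHS](bigD1 ord0) //= a0 !mul0rn.
  by congr (_ + _); apply: eq_bigr => i /negbTE->.
have tdeg_u' : tdeg u' = (tdeg u - u ord0)%N.
  rewrite tdeg_cm_of_fun /Defs.tdeg (bigD1 ord0) //= [in RHS](bigD1 ord0) //= add0n addKn.
  by apply: eq_bigr => i /negbTE->.
by rewrite -chipsi_u' -tdeg_u'; apply/deltaA_le/memSh_psi.
Qed.

(* Fiber-minimal monomials play the role of the standard monomials modulo T. *)
Definition fiber_minimal u := forall v, psimon v = psimon u -> ~~ lty v u.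

(* Padding a representation of chi u of degree delta^A(chi u) with y_0's gives a monomial
   in the fiber of u whose y_0-exponent is deg u - delta^A(chi u); fiber minimality of u
   forces u_0 to be at least that. *)
Lemma deltaA_fiber_minimal u :
  fiber_minimal u -> deltaA a (chipsi u) = (tdeg u - u ord0)%N.
Proof.
move=> minu; have := deltaA_chipsi_le u; set D := deltaA a (chipsi u) => Dle.
have Dt : (D <= tdeg u)%N by apply/deltaA_le/memSh_psi.
have /existsP[t /andP[/eqP sum_t /eqP sum_at]] := deltaA_memSh (chipsi_inSM u).
pose v := cm_of_fun (fun i => t i + (if i == ord0 then tdeg u - D else 0))%N.
have chipsi_v : chipsi v = chipsi u.
  rewrite chipsi_cm_of_fun; under eq_bigr do rewrite mulrnDr.
  rewrite big_split /= sum_at big1 ?addr0 // => i _.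
  by case: eqP => [->|_]; rewrite ?a0 ?mul0rn ?mulr0n.
have tdeg_v : tdeg v = tdeg u.
  rewrite tdeg_cm_of_fun big_split /= sum_t (bigD1 ord0) //= big1 ?addn0.
    by rewrite subnKC.
  by move=> i /negbTE->.
have : ~~ lty v u by apply: minu; apply: val_inj; rewrite /= chipsi_v tdeg_v.
rewrite /lt_y tdeg_v ltnn eqxx /= negb_or -leqNgt cm_of_funE eqxx => /andP[+ _].
by move=> ineq; apply/eqP; rewrite eqn_leq Dle /=; lia.
Qed.

Lemma fiber_minimalMl u w : fiber_minimal (mulcm u w) -> fiber_minimal u.
Proof.
move=> minuw v vu; apply/negP => /(lt_yMr w) ltvwuw.
by have := minuw (mulcm v w); rewrite !psimonM vu ltvwuw => /(_ erefl).
Qed.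

Lemma fiber_minimalMr u w : fiber_minimal (mulcm u w) -> fiber_minimal w.
Proof. by rewrite mulcmC; apply: fiber_minimalMl. Qed.

Lemma gsparse_lt_psimon u v :
  fiber_minimal u -> lty v u -> gsparse_lt ltM (psimon v) (psimon u).
Proof.
move=> minu ltvu; have Dv := deltaA_chipsi_le v; have v0t := cm0_le_tdeg v.
move: (ltvu); rewrite /gsparse_lt /sparse_lt /= (deltaA_fiber_minimal minu) {1}/lt_y.
case/orP=> [->//|/andP[/eqP tvu]]; rewrite tvu eqxx ltnn /= in Dv v0t *.
case/orP=> [u0v0|/andP[/eqP v0u0]].
  by rewrite (leq_ltn_trans Dv) //; lia.
case/orP=> [ltMvu|/andP[/eqP cvu _]].
  by move: Dv; rewrite v0u0 leq_eqVlt => /orP[/eqP->|->]; rewrite ?eqxx ?ltMvu ?orbT.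
have : ~~ lty v u by apply: minu; apply: val_inj; rewrite /= cvu tvu.
by rewrite ltvu.
Qed.

Lemma ddivides_psimon u w :
  fiber_minimal (mulcm u w) -> ddivides (psimon u) (psimon (mulcm u w)).
Proof.
move=> minuw; exists (psimon w); split; first by rewrite psimonM.
have [minu minw] := (fiber_minimalMl minuw, fiber_minimalMr minuw).
rewrite /sdeg /= !deltaA_fiber_minimal // tdegM mulcmE.
by have := cm0_le_tdeg u; have := cm0_le_tdeg w; lia.
Qed.

Lemma exists_fiber_minimal p : exists u, psimon u = p /\ fiber_minimal u.
Proof.
have [v vp] := psimon_surj p.
have [u [_ up minu]] := @lt_y_has_minimal (fun u => psimon u = p) (ex_intro _ v (conj I vp)).
by exists u; split=> // w wu; apply: minu; rewrite ?wu.
Qed.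

Definition fiber_rep p : 'X_{1..m.+1} :=
  proj1_sig (constructive_indefinite_description _ (exists_fiber_minimal p)).

Lemma fiber_repP p : psimon (fiber_rep p) = p /\ fiber_minimal (fiber_rep p).
Proof. exact: proj2_sig (constructive_indefinite_description _ (exists_fiber_minimal p)). Qed.

Section Lifting.
Variable K : comNzRingType.
Implicit Types (g : {malg K['X_{1..m.+1}]}) (f : {malg K[Sh a]}).

Lemma is_LM_psi g u :
  is_LM lty g u -> fiber_minimal u -> is_LM (gsparse_lt ltM) (psi a g) (psimon u).
Proof.
move=> [ug maxu] minu.
have coef_u : (psi a g)@_(psimon u) = g@_u.
  rewrite psi_coef (big_fsetD1 u) //= eqxx mulr1n big_seq big1 ?addr0 // => v.
  rewrite in_fsetD1 => /andP[nvu vg]; case: eqP => // vu.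
  by have := minu v vu; rewrite maxu.
split; first by rewrite -mcoeff_neq0 coef_u mcoeff_neq0.
move=> p pg npu; have [v vg vp] : exists2 v, v \in msupp g & psimon v = p.
  apply: NNPP => nov; move: pg; rewrite -mcoeff_neq0 psi_coef big_seq big1 ?eqxx // => v vg.
  by case: eqP => // vp; case: nov; exists v.
rewrite -vp; apply: gsparse_lt_psimon minu (maxu v vg _).
by apply: contra_neq npu => vu; rewrite -vp vu.
Qed.

(* lift f is phi(f): its monomials are fiber-minimal, so it is its own normal form. *)
Definition lift f : {malg K['X_{1..m.+1}]} :=
  \sum_(p <- msupp f) << f@_p *g fiber_rep p >>.

Lemma psi_lift f : psi a (lift f) = f.
Proof.
rewrite raddf_sum [RHS]monalgE; apply: eq_bigr => p _.
by rewrite /= psiU (fiber_repP p).1.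
Qed.

Lemma lift_fiber_minimal f u : u \in msupp (lift f) -> fiber_minimal u.
Proof.
move=> uf; apply: NNPP => nminu; move: uf; rewrite -mcoeff_neq0 raddf_sum big1 ?eqxx // => p _.
by rewrite /= mcoeffU; case: eqP => // pu; case: nminu; rewrite -pu; apply: (fiber_repP p).2.
Qed.

Lemma fiber_minimal_not_LM_ker u :
  fiber_minimal u ->
  ~ exists h : {malg K['X_{1..m.+1}]}, [/\ Tker a h, h != 0 & is_LM lty h u].
Proof.
move=> minu [h [h0 _ LMh]]; have [uh _] := is_LM_psi LMh minu.
by rewrite /Tker in h0; rewrite h0 msupp0 in uh.
Qed.

Lemma lift_phi_img (I : {malg K[Sh a]} -> Prop) f : I f -> phi_img ltM ltT I (lift f).
Proof.
move=> If; exists f; split=> //; exists (lift f); split; first exact: psi_lift.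
split; first by rewrite /Tker subrr raddf0.
by move=> u /lift_fiber_minimal/fiber_minimal_not_LM_ker.
Qed.

End Lifting.

Section SparseGroebner.
Variables (K : fieldType) (I : {malg K[Sh a]} -> Prop) (G : seq {malg K['X_{1..m.+1}]}).
Hypothesis idealI : is_ideal I.
Local Notation J := (ideal_gen (fun r => phi_img ltM ltT I r \/ Tker a r)).
Hypothesis G_groebner : is_groebner lty J G.

Lemma psi_J r : J r -> I (psi a r).
Proof.
have psi_gen r' : phi_img ltM ltT I r' \/ Tker a r' -> I (psi a r').
  case=> [[f [If [g [gf [gr _]]]]]|r0]; last by rewrite r0; case: idealI.
  by move: gr; rewrite /Tker raddfB /= => /subr0_eq <-; rewrite gf.
by move=> Jr; apply: (ideal_gen_min idealI) (ideal_gen_rmorph psi_gen Jr).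
Qed.

Lemma lift_J f : I f -> J (lift f).
Proof. by move=> If; apply/ideal_gen_mem; left; apply: lift_phi_img. Qed.

Lemma psi_groebner_sub g : g \in map (@psi n m a K) G -> I g.
Proof. by case: G_groebner => GJ _ /mapP[h hG ->]; apply/psi_J/GJ. Qed.

Lemma psi_groebner_generates f : I f -> ideal_gen (fun g => g \in map (@psi n m a K) G) f.
Proof.
move=> /lift_J /(groebner_ideal_gen lt_y_monomial_order G_groebner).
by rewrite -{2}(psi_lift f); apply: ideal_gen_rmorph => g gG; apply: map_f.
Qed.

Lemma psi_groebner_ddivides f : I f -> f != 0 ->
  exists2 g, g \in map (@psi n m a K) G & g != 0 /\ exists pg pf,
    [/\ is_LM (gsparse_lt ltM) g pg, is_LM (gsparse_lt ltM) f pf & ddivides pg pf].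
Proof.
move=> If nz_f; have nz_lift : lift f != 0.
  by apply: contraNneq nz_f => lift0; rewrite -(psi_lift f) lift0 raddf0.
have [_ GLM] := G_groebner.
have [g gG [_ [ug [uf [LMg LMf [w ugw]]]]]] := GLM _ (lift_J If) nz_lift.
have minuf : fiber_minimal uf by apply: lift_fiber_minimal (LMf.1).
rewrite -{}ugw in minuf LMf.
have LMpg := is_LM_psi LMg (fiber_minimalMl minuf).
exists (psi a g); first exact: map_f.
split; first by apply: contraTneq LMpg.1 => ->; rewrite msupp0.
exists (psimon ug), (psimon (mulcm ug w)); split=> //; last exact: ddivides_psimon.
by rewrite -{1}(psi_lift f); apply: is_LM_psi.
Qed.

End SparseGroebner.

End PolytopeSemigroup.

Theorem mainTheorem2
  (K : fieldType) (hK : [pchar K] =i pred0)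
  (R : realFieldType) (n : nat) (V : seq 'rV[R]_n)
  (m : nat) (a : 'I_m.+1 -> 'rV[int]_n)
  (ha_inj : injective a) (ha0 : a ord0 = 0)
  (hM0 : in_conv V 0)
  (ha_enum : forall z : 'rV[int]_n, in_conv V (lattice_pt R z) <-> exists i, a i = z)
  (hpointed : forall s, inSM a s -> inSM a (- s) -> s = 0)
  (ltM : rel 'rV[int]_n) (hltM : monomial_order (inSM a) +%R ltM)
  (ltT : rel 'X_{1..m.+1}) (hltT : monomial_order (fun _ => True) (@mulcm _) ltT)
  (I : {malg K[Sh a]} -> Prop) (hI : homogeneous_ideal I)
  (G : seq {malg K['X_{1..m.+1}]}) :
  is_groebner (lt_y a ltM ltT)
    (ideal_gen (fun r => phi_img ltM ltT I r \/ Tker a r)) G ->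
  is_sparse_groebner ltM I (map (@psi _ _ a K) G).
Proof.
move=> G_groebner; have [idealI _] := hI; split.
- exact: (psi_groebner_sub idealI G_groebner).
- exact: (psi_groebner_generates ha0 hltM hltT G_groebner).
- exact: (psi_groebner_ddivides ha0 hltM hltT G_groebner).
Qed.
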